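(* Let $\{X_n\}$ be the Bessel-like walk of the context. There exists a constant $K_2>0$ (depending only on the transition probabilities) such that for all integers $h\ge1$, $m\ge 2h^2$ and $0<q<h$, \[ P_q\big(X_n\in(0,h)\text{ for all } n\le m\big)\le e^{-K_2m/h^2}. \]
   Context: Let $\{X_n\}_{n\ge0}$ be a Markov chain on $\mathbb{Z}_+=\{0,1,2,\dots\}$ with steps $\pm1$, reflecting at $0$, and for $x\ge1$ transition probabilities $p_x=p(x,x+1)$, $q_x=p(x,x-1)=1-p_x$. A drift parameter $\delta\ge-1$ is fixed and $R_x$ is defined by $p_x=\frac12\left(1-\frac{\delta}{2x}+\frac{R_x}{2}\right)$, where $R_x=o(1/x)$ as $x\to\infty$. Uniform ellipticity: there is $\epsilon>0$ with $p_x,q_x\in[\epsilon,1-\epsilon]$ for all $x\ge1$. The walk is assumed recurrent (for $\delta>-1$ this is automatic). $P_q$ denotes the law of the chain started at $q$. *)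

From Stdlib Require Import Reals Lra Lia.
From Coquelicot Require Import Coquelicot.
Open Scope R_scope.

(* Nearest-neighbour walk on Z_+ : p x = p(x,x+1), 1 - p x = p(x,x-1) for x >= 1;
   reflecting at 0 (p(0,1) = 1).  The value [p 0] is irrelevant. *)

(* R_x defined from p_x = 1/2 (1 - delta/(2x) + R_x/2). *)
Definition Rterm (p : nat -> R) (delta : R) (x : nat) : R :=
  2 * (2 * p x - 1 + delta / (2 * INR x)).

Definition unif_elliptic (p : nat -> R) : Prop :=
  exists eps : R, 0 < eps /\
    forall x : nat, (1 <= x)%nat -> eps <= p x <= 1 - eps /\ eps <= 1 - p x <= 1 - eps.

(* hit p n x = P_x(the chain hits 0 within n steps). *)
Fixpoint hit (p : nat -> R) (n x : nat) : R :=
  match x with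
  | O => 1
  | S _ => match n with
           | O => 0
           | S n' => p x * hit p n' (S x) + (1 - p x) * hit p n' (pred x)
           end
  end.

(* Recurrence: started from 0 the chain moves to 1 and returns to 0 with
   probability one, i.e. P_1(hit 0 eventually) = lim_n P_1(hit 0 within n) = 1. *)
Definition recurrent (p : nat -> R) : Prop :=
  is_lim_seq (fun n => hit p n 1%nat) 1.

Definition in_open (h x : nat) : bool := Nat.ltb 0 x && Nat.ltb x h.

(* stay p h m x = P_x(X_n in (0,h) for all n = 0..m), computed by the
   Markov property (sum over paths of the products of transition probabilities). *)
Fixpoint stay (p : nat -> R) (h m x : nat) : R :=
  match m with
  | O => if in_open h x then 1 else 0
  | S m' => if in_open h x
            then p x * stay p h m' (S x) + (1 - p x) * stay p h m' (pred x)
            else 0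
  end.

From Stdlib Require Import Reals Lra Lia.
From Coquelicot Require Import Coquelicot.
Open Scope R_scope.

(* It suffices to show that from any starting point the walk leaves (0,h)
   within 2h^2 steps with probability at least some alpha > 0 independent of
   h: the Markov property then gives P(stay m steps) <= (1 - alpha)^(m/2h^2).
   For small h this follows from ellipticity (climb straight up to h).  For
   large h one builds g >= 0 on [0,h] with drift Lg <= -1 on (0,h) and
   g <= 4/3 h^2 + O(h); then (n+1) P(stay n steps) <= g(x), so staying 2h^2
   steps has probability at most 5/6.  Away from the origin the drift
   2p_x - 1 ~ -delta/(2x) makes h^2 - x^2 (delta <= 0) or x(2h - x) (delta > 0) a
   Lyapunov function; near the origin a steep barrier function is added. *)

Lemma in_open_spec h x : in_open h x = true <-> (0 < x < h)%nat.
Proof. unfold in_open; rewrite Bool.andb_true_iff, !Nat.ltb_lt; tauto. Qed.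

Lemma in_open_ge h x : (h <= x)%nat -> in_open h x = false.
Proof.
  intros Hx; unfold in_open.
  rewrite (proj2 (Nat.ltb_ge x h) Hx); apply Bool.andb_false_r.
Qed.

Lemma stay_out p h m x : in_open h x = false -> stay p h m x = 0.
Proof. intros H; destruct m; simpl; rewrite H; reflexivity. Qed.

Lemma INR_pred x : (1 <= x)%nat -> INR (pred x) = INR x - 1.
Proof. intros H; destruct x as [|x]; [lia|]; rewrite S_INR; simpl; ring. Qed.

Lemma exp_le_compat a b : a <= b -> exp a <= exp b.
Proof.
  intros [Hlt| <-]; [apply Rlt_le, exp_increasing, Hlt | apply Rle_refl].
Qed.

Lemma exp_pow a k : exp a ^ k = exp (INR k * a).
Proof.
  rewrite <- Rpower_pow by apply exp_pos.
  unfold Rpower; rewrite ln_exp; reflexivity.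
Qed.

Definition drift (p g : nat -> R) (x : nat) : R :=
  p x * g (S x) + (1 - p x) * g (pred x) - g x.

Lemma drift_add p f g x :
  drift p (fun y => f y + g y) x = drift p f x + drift p g x.
Proof. unfold drift; ring. Qed.

Lemma drift_scale p c f x : drift p (fun y => c * f y) x = c * drift p f x.
Proof. unfold drift; ring. Qed.

Definition lyapunov (p : nat -> R) (h : nat) (g : nat -> R) : Prop :=
  (forall x, (x <= h)%nat -> 0 <= g x) /\
  (forall x, in_open h x = true -> drift p g x <= -1).

Section Stay.
Variable p : nat -> R.
Hypothesis p_range : forall x, (1 <= x)%nat -> 0 <= p x <= 1.

Lemma stay_range h m x : 0 <= stay p h m x <= 1.
Proof.
  revert x; induction m as [|m IHm]; intros x; simpl;
    destruct (in_open h x) eqn:E; try lra.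
  apply in_open_spec in E.
  pose proof (p_range x ltac:(lia)); pose proof (IHm (S x)); pose proof (IHm (pred x)).
  nra.
Qed.

(* The Markov property at time [a]. *)
Lemma stay_add_le h a b M : (forall y, stay p h b y <= M) ->
  forall x, stay p h (a + b) x <= M * stay p h a x.
Proof.
  intros HM; induction a as [|a IHa]; intros x; simpl.
  - destruct (in_open h x) eqn:E; [rewrite Rmult_1_r; apply HM|].
    rewrite stay_out by exact E; lra.
  - destruct (in_open h x) eqn:E; [|lra].
    apply in_open_spec in E; pose proof (p_range x ltac:(lia)).
    pose proof (IHa (S x)); pose proof (IHa (pred x)).
    assert (p x * stay p h (a + b) (S x) <= p x * (M * stay p h a (S x)))
      by (apply Rmult_le_compat_l; lra).
    assert ((1 - p x) * stay p h (a + b) (pred x) <= (1 - p x) * (M * stay p h a (pred x)))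
      by (apply Rmult_le_compat_l; lra).
    lra.
Qed.

Lemma stay_antimono h m n x : (m <= n)%nat -> stay p h n x <= stay p h m x.
Proof.
  intros Hmn; replace n with (m + (n - m))%nat by lia.
  rewrite <- (Rmult_1_l (stay p h m x)).
  apply stay_add_le; intros y; apply stay_range.
Qed.

Lemma stay_iter_le h T alpha : 0 <= 1 - alpha ->
  (forall y, stay p h T y <= 1 - alpha) ->
  forall k r x, stay p h (k * T + r) x <= (1 - alpha) ^ k.
Proof.
  intros Ha HT k r; induction k as [|k IHk]; intros x; simpl.
  - apply stay_range.
  - replace (T + k * T + r)%nat with (T + (k * T + r))%nat by lia.
    eapply Rle_trans; [apply stay_add_le, IHk|].
    pose proof (pow_le _ k Ha); pose proof (HT x).
    rewrite Rmult_comm; apply Rmult_le_compat_r; lra.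
Qed.

Lemma stay_exp_decay h T alpha : (0 < T)%nat -> 0 <= alpha <= 1 ->
  (forall y, stay p h T y <= 1 - alpha) ->
  forall m x, (T <= m)%nat -> stay p h m x <= exp (- alpha * INR m / (2 * INR T)).
Proof.
  intros HT Ha Hstay m x Hm.
  pose proof (Nat.div_mod m T ltac:(lia)) as Hdiv.
  pose proof (Nat.mod_upper_bound m T ltac:(lia)) as Hmod.
  set (k := (m / T)%nat) in *; set (r := (m mod T)%nat) in *.
  assert (Hk : (1 <= k)%nat) by (destruct k; lia).
  assert (Hmk : INR m <= INR (2 * T * k)) by (apply le_INR; nia).
  rewrite !mult_INR in Hmk; simpl INR in Hmk.
  assert (HT' : 0 < INR T) by (apply lt_0_INR; lia).
  replace (stay p h m x) with (stay p h (k * T + r) x) by (f_equal; lia).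
  eapply Rle_trans; [apply (stay_iter_le h T alpha); [lra | exact Hstay]|].
  eapply Rle_trans; [apply pow_incr; split; [lra | apply (exp_ineq1_le (- alpha))]|].
  rewrite exp_pow; apply exp_le_compat.
  assert (INR m / (2 * INR T) <= INR k).
  { apply Rmult_le_reg_r with (2 * INR T); [lra|].
    unfold Rdiv; rewrite Rmult_assoc, Rinv_l, Rmult_1_r by lra; lra. }
  unfold Rdiv in *; nra.
Qed.

Lemma stay_le_of_elliptic_up h eps : 0 <= eps <= 1 ->
  (forall x, (1 <= x)%nat -> eps <= p x) ->
  forall n x, (h <= x + n)%nat -> stay p h n x <= 1 - eps ^ (h - x).
Proof.
  intros He Hup n; induction n as [|n IHn]; intros x Hx.
  - rewrite stay_out by (apply in_open_ge; lia).
    replace (h - x)%nat with 0%nat by lia; simpl; lra.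
  - simpl; destruct (in_open h x) eqn:E.
    + apply in_open_spec in E.
      replace (h - x)%nat with (S (h - S x)) by lia; simpl.
      pose proof (IHn (S x) ltac:(lia)); pose proof (stay_range h n (pred x)).
      pose proof (Hup x ltac:(lia)); pose proof (p_range x ltac:(lia)).
      pose proof (pow_le eps (h - S x) ltac:(lra)).
      assert (p x * stay p h n (S x) <= p x * (1 - eps ^ (h - S x)))
        by (apply Rmult_le_compat_l; lra).
      assert ((1 - p x) * stay p h n (pred x) <= 1 - p x)
        by (rewrite <- (Rmult_1_r (1 - p x)) at 2; apply Rmult_le_compat_l; lra).
      nra.
    + pose proof (pow_incr eps 1 (h - x) He); rewrite pow1 in *; lra.
Qed.

(* Markov's inequality for the exit time, whose mean is at most [g x]. *)
Lemma stay_le_lyapunov h g : lyapunov p h g ->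
  forall n x, (x <= h)%nat -> INR (S n) * stay p h n x <= g x.
Proof.
  intros [Hg0 Hdrift]; induction n as [|n IHn]; intros x Hx;
    simpl stay; destruct (in_open h x) eqn:E;
    try (rewrite Rmult_0_r; apply Hg0, Hx).
  - pose proof (Hdrift x E); apply in_open_spec in E; unfold drift in *.
    pose proof (p_range x ltac:(lia)).
    pose proof (Hg0 (S x) ltac:(lia)); pose proof (Hg0 (pred x) ltac:(lia)).
    simpl; nra.
  - pose proof (Hdrift x E); apply in_open_spec in E; unfold drift in *.
    pose proof (p_range x ltac:(lia)).
    pose proof (IHn (S x) ltac:(lia)); pose proof (IHn (pred x) ltac:(lia)).
    pose proof (stay_range h n (S x)); pose proof (stay_range h n (pred x)).
    assert (p x * (INR (S n) * stay p h n (S x)) <= p x * g (S x))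
      by (apply Rmult_le_compat_l; lra).
    assert ((1 - p x) * (INR (S n) * stay p h n (pred x)) <= (1 - p x) * g (pred x))
      by (apply Rmult_le_compat_l; lra).
    rewrite (S_INR (S n)); nra.
Qed.

End Stay.

Fixpoint barrier (b : R) (N x : nat) : R :=
  match x with
  | O => 0
  | S k => barrier b N k + (b ^ (N - k) - 1)
  end.

Lemma barrier_ge0 b N x : 1 <= b -> 0 <= barrier b N x.
Proof.
  intros Hb; induction x as [|x IHx]; simpl; [lra|].
  pose proof (pow_R1_Rle b (N - x) Hb); lra.
Qed.

Lemma barrier_le b N x : 1 <= b -> barrier b N x <= INR N * b ^ N.
Proof.
  intros Hb.
  assert (Hmin : barrier b N x <= INR (Nat.min x N) * b ^ N).
  { induction x as [|x IHx]; simpl barrier; [simpl; lra|].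
    destruct (Nat.lt_ge_cases x N) as [HxN|HxN].
    - rewrite Nat.min_l in * by lia; rewrite S_INR.
      pose proof (Rle_pow b (N - x) N Hb ltac:(lia)); lra.
    - rewrite Nat.min_r in * by lia.
      replace (N - x)%nat with 0%nat by lia; simpl; lra. }
  eapply Rle_trans; [exact Hmin|].
  apply Rmult_le_compat_r; [pose proof (pow_R1_Rle b N Hb); lra|].
  apply le_INR; lia.
Qed.

Lemma drift_barrier_far p b N x : (N < x)%nat -> drift p (barrier b N) x = 0.
Proof.
  intros HNx; destruct x as [|x]; [lia|]; unfold drift; simpl pred; simpl barrier.
  replace (N - S x)%nat with 0%nat by lia; replace (N - x)%nat with 0%nat by lia.
  simpl; ring.
Qed.

(* With [b (1 - p x) >= 2], the downward slope [b^(N-x+1) - 1] outweighs the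
   upward one [b^(N-x) - 1]. *)
Lemma drift_barrier_near p b N x : 1 <= b -> 0 <= p x <= 1 -> 2 <= (1 - p x) * b ->
  (1 <= x <= N)%nat -> drift p (barrier b N) x <= -1.
Proof.
  intros Hb Hp Hpb Hx; destruct x as [|x]; [lia|]; unfold drift; simpl pred; simpl barrier.
  replace (N - x)%nat with (S (N - S x)) by lia; simpl pow.
  pose proof (pow_R1_Rle b (N - S x) Hb).
  set (c := b ^ (N - S x)) in *.
  assert (p (S x) * (c - 1) <= c - 1) by nra.
  assert (2 * c <= (1 - p (S x)) * b * c) by nra.
  match goal with |- ?lhs <= _ =>
    replace lhs with (p (S x) * (c - 1) - (1 - p (S x)) * b * c + (1 - p (S x))) by ring end.
  lra.
Qed.

Lemma drift_cap p h x : (1 <= x)%nat ->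
  drift p (fun y => INR h ^ 2 - INR y ^ 2) x = -1 - 2 * INR x * (2 * p x - 1).
Proof. intros Hx; unfold drift; rewrite INR_pred, S_INR by exact Hx; ring. Qed.

Lemma drift_tent p h x : (1 <= x)%nat ->
  drift p (fun y => INR y * (2 * INR h - INR y)) x =
  2 * (INR h - INR x) * (2 * p x - 1) - 1.
Proof. intros Hx; unfold drift; rewrite INR_pred, S_INR by exact Hx; ring. Qed.

(* [g] is a Lyapunov function on [(0,h)] except near the origin, where its
   drift is only bounded by [3h]; [barrier] repairs it there. *)
Definition lyapunov_beyond (p : nat -> R) (h N : nat) (g : nat -> R) : Prop :=
  (forall x, (x <= h)%nat -> 0 <= g x <= 4/3 * INR h ^ 2) /\
  (forall x, in_open h x = true -> drift p g x <= 3 * INR h) /\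
  (forall x, in_open h x = true -> (N < x)%nat -> drift p g x <= -1).

Section Bessel.
Variable p : nat -> R.
Hypothesis p_range : forall x, (1 <= x)%nat -> 0 <= p x <= 1.

Lemma cap_lyapunov_beyond h N :
  (forall x, (N < x)%nat -> -1/4 <= 2 * INR x * (2 * p x - 1)) ->
  lyapunov_beyond p h N (fun y => 4/3 * (INR h ^ 2 - INR y ^ 2)).
Proof.
  intros Hbias; split; [|split].
  - intros x Hx; pose proof (le_INR _ _ Hx); pose proof (pos_INR x); nra.
  - intros x Hx; apply in_open_spec in Hx.
    rewrite drift_scale, drift_cap by lia.
    pose proof (p_range x ltac:(lia)); pose proof (pos_INR x).
    assert (INR x < INR h) by (apply lt_INR; lia).
    nra.
  - intros x Hx HNx; apply in_open_spec in Hx.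
    rewrite drift_scale, drift_cap by lia.
    pose proof (Hbias x HNx); lra.
Qed.

Lemma tent_lyapunov_beyond h N : (forall x, (N < x)%nat -> 2 * p x < 1) ->
  lyapunov_beyond p h N (fun y => INR y * (2 * INR h - INR y)).
Proof.
  intros Hbias; split; [|split].
  - intros x Hx; pose proof (le_INR _ _ Hx); pose proof (pos_INR x); nra.
  - intros x Hx; apply in_open_spec in Hx.
    rewrite drift_tent by lia.
    pose proof (p_range x ltac:(lia)); pose proof (pos_INR x).
    assert (INR x < INR h) by (apply lt_INR; lia).
    nra.
  - intros x Hx HNx; apply in_open_spec in Hx.
    rewrite drift_tent by lia.
    pose proof (Hbias x HNx).
    assert (INR x < INR h) by (apply lt_INR; lia).
    nra.
Qed.

Variable delta : R.
Hypothesis R_small : is_lim_seq (fun n : nat => INR (S n) * Rterm p delta (S n)) 0.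

(* [x R_x = 2 x (2 p_x - 1) + delta]. *)
Lemma bessel_drift_limit eta : 0 < eta ->
  exists N, forall x, (N < x)%nat -> Rabs (2 * INR x * (2 * p x - 1) + delta) < eta.
Proof.
  intros Heta; apply is_lim_seq_spec in R_small.
  destruct (R_small (mkposreal eta Heta)) as [N HN].
  exists N; intros x HNx; destruct x as [|n]; [lia|].
  specialize (HN n ltac:(lia)); simpl in HN.
  assert (0 < INR (S n)) by (apply lt_0_INR; lia).
  replace (2 * INR (S n) * (2 * p (S n) - 1) + delta)
    with (INR (S n) * Rterm p delta (S n) - 0) by (unfold Rterm; field; lra).
  exact HN.
Qed.

Lemma exists_lyapunov_beyond : exists N, forall h, exists g, lyapunov_beyond p h N g.
Proof.
  destruct (Rle_lt_dec delta 0) as [Hd|Hd].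
  - destruct (bessel_drift_limit (1/4) ltac:(lra)) as [N HN].
    exists N; intros h; eexists; apply cap_lyapunov_beyond.
    intros x HNx; pose proof (Rabs_def2 _ _ (HN x HNx)); lra.
  - destruct (bessel_drift_limit delta Hd) as [N HN].
    exists N; intros h; eexists; apply tent_lyapunov_beyond.
    intros x HNx; pose proof (Rabs_def2 _ _ (HN x HNx)).
    assert (0 < INR x) by (apply lt_0_INR; lia).
    nra.
Qed.

Lemma exists_lyapunov eps : 0 < eps -> (forall x, (1 <= x)%nat -> eps <= 1 - p x) ->
  exists A, 0 <= A /\ forall h, exists g,
    lyapunov p h g /\ forall x, (x <= h)%nat -> g x <= 4/3 * INR h ^ 2 + A * (INR h + 1).
Proof.
  intros Heps Hdown.
  destruct exists_lyapunov_beyond as [N HN].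
  set (b := 2 / eps).
  assert (Heps1 : eps <= 1) by (pose proof (Hdown 1%nat (le_n 1)); pose proof (p_range 1%nat (le_n 1)); lra).
  assert (Hb : 1 <= b) by (unfold b; apply Rmult_le_reg_r with eps; [lra|];
    unfold Rdiv; rewrite Rmult_assoc, Rinv_l by lra; lra).
  assert (Hpb : forall x, (1 <= x)%nat -> 2 <= (1 - p x) * b).
  { intros x Hx; pose proof (Hdown x Hx).
    replace 2 with (eps * b) at 1 by (unfold b; field; lra).
    apply Rmult_le_compat_r; lra. }
  set (M := INR N * b ^ N).
  assert (HM : 0 <= M) by (apply Rmult_le_pos; [apply pos_INR | apply pow_le; lra]).
  exists (3 * M); split; [lra|]; intros h.
  destruct (HN h) as [g0 [Hg0 [Hnear Hfar]]].
  set (C := 3 * INR h + 1).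
  assert (HC : 0 <= C) by (unfold C; pose proof (pos_INR h); lra).
  exists (fun y => g0 y + C * barrier b N y); split; [split|].
  - intros x Hx; pose proof (Hg0 x Hx); pose proof (barrier_ge0 b N x Hb); nra.
  - intros x Hx; rewrite drift_add, drift_scale.
    pose proof (in_open_spec h x) as Hspec; pose proof (proj1 Hspec Hx).
    destruct (Nat.le_gt_cases x N) as [HxN|HxN].
    + pose proof (Hnear x Hx).
      pose proof (drift_barrier_near p b N x Hb (p_range x ltac:(lia))
        (Hpb x ltac:(lia)) ltac:(lia)).
      unfold C in *; nra.
    + rewrite drift_barrier_far by exact HxN; pose proof (Hfar x Hx HxN); lra.
  - intros x Hx; pose proof (Hg0 x Hx); pose proof (pos_INR h).
    pose proof (barrier_le b N x Hb) as Hbar; fold M in Hbar.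
    assert (C * barrier b N x <= C * M) by (apply Rmult_le_compat_l; lra).
    unfold C in *; nra.
Qed.

End Bessel.

Lemma pow_antimono x m n : 0 <= x <= 1 -> (m <= n)%nat -> x ^ n <= x ^ m.
Proof.
  intros Hx Hmn; replace n with (m + (n - m))%nat by lia; rewrite pow_add.
  pose proof (pow_le x m (proj1 Hx)); pose proof (pow_le x (n - m) (proj1 Hx)).
  pose proof (pow_incr x 1 (n - m) Hx); rewrite pow1 in *; nra.
Qed.

Lemma stay_le_of_lyapunov_bound p h g A :
  (forall x, (1 <= x)%nat -> 0 <= p x <= 1) ->
  (1 <= h)%nat -> 0 <= A -> 6 * A <= INR h -> lyapunov p h g ->
  (forall x, (x <= h)%nat -> g x <= 4/3 * INR h ^ 2 + A * (INR h + 1)) ->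
  forall x, stay p h (2 * h * h) x <= 5/6.
Proof.
  intros p_range Hh HA HAh Hly Hbound x.
  destruct (in_open h x) eqn:E; [|rewrite stay_out by exact E; lra].
  apply in_open_spec in E.
  pose proof (stay_le_lyapunov p p_range h g Hly (2 * h * h) x ltac:(lia)).
  pose proof (Hbound x ltac:(lia)); pose proof (stay_range p p_range h (2 * h * h) x).
  assert (1 <= INR h) by (apply (le_INR 1); exact Hh).
  rewrite S_INR, !mult_INR in *; simpl INR in *.
  nra.
Qed.

Lemma stay_escape_uniform p delta :
  (forall x, (1 <= x)%nat -> 0 <= p x <= 1) ->
  is_lim_seq (fun n : nat => INR (S n) * Rterm p delta (S n)) 0 ->
  unif_elliptic p ->
  exists alpha, 0 < alpha <= 1 /\
    forall h x, (1 <= h)%nat -> stay p h (2 * h * h) x <= 1 - alpha.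
Proof.
  intros p_range R_small [eps [Heps Hell]].
  destruct (exists_lyapunov p p_range delta R_small eps Heps
    (fun x Hx => proj1 (proj2 (Hell x Hx)))) as [A [HA Hg]].
  destruct (INR_unbounded (6 * A)) as [H HH].
  assert (Heps1 : eps <= 1) by (pose proof (Hell 1%nat (le_n 1)); lra).
  pose proof (pow_lt eps H Heps).
  exists (Rmin (1/6) (eps ^ H)).
  split; [split; [apply Rmin_pos; lra | pose proof (Rmin_l (1/6) (eps ^ H)); lra]|].
  intros h x Hh; destruct (Rle_lt_dec (6 * A) (INR h)) as [Hbig|Hsmall].
  - destruct (Hg h) as [g [Hly Hbound]].
    pose proof (stay_le_of_lyapunov_bound p h g A p_range Hh HA Hbig Hly Hbound x).
    pose proof (Rmin_l (1/6) (eps ^ H)); lra.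
  - assert (HhH : (h < H)%nat) by (apply INR_lt; lra).
    pose proof (stay_antimono p p_range h h (2 * h * h) x ltac:(nia)).
    pose proof (stay_le_of_elliptic_up p p_range h eps ltac:(lra)
      (fun y Hy => proj1 (proj1 (Hell y Hy))) h x ltac:(lia)).
    pose proof (pow_antimono eps (h - x) H ltac:(lra) ltac:(lia)).
    pose proof (Rmin_r (1/6) (eps ^ H)); lra.
Qed.

Theorem lemma4p1 (p : nat -> R) (delta : R)
  (Hdelta : -1 <= delta)
  (Hrange : forall x : nat, (1 <= x)%nat -> 0 <= p x <= 1)
  (HR : is_lim_seq (fun n : nat => INR (S n) * Rterm p delta (S n)) 0)
  (Hell : unif_elliptic p)
  (Hrec : recurrent p) :
  exists K2 : R, 0 < K2 /\
    forall (h m q : nat), (1 <= h)%nat -> (2 * h * h <= m)%nat ->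
      (0 < q)%nat -> (q < h)%nat ->
      stay p h m q <= exp (- K2 * INR m / (INR h ^ 2)).
Proof.
  destruct (stay_escape_uniform p delta Hrange HR Hell) as [alpha [Halpha Hescape]].
  exists (alpha / 4); split; [lra|].
  intros h m q Hh Hm _ _.
  assert (0 < INR h) by (apply lt_0_INR; lia).
  eapply Rle_trans.
  - apply (stay_exp_decay p Hrange h (2 * h * h) alpha); [nia | lra | | exact Hm].
    intros y; apply Hescape, Hh.
  - apply exp_le_compat, Req_le.
    rewrite !mult_INR; simpl INR; field; lra.
Qed.
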